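(* Let $n$ and $x$ be positive integers with $x\le n$, let $k\ge 0$, and let $\mathcal M=\{M_1,\dots,M_s\}$ be a collection of perfect matchings of $K_{2n}$ such that each of the $\binom{2n}{2}$ edges of $K_{2n}$ belongs to at most $k$ of the matchings $M_1,\dots,M_s$. Let $$N=\sum_{j=\max(0,\,2x-n)}^{x}\binom{2x}{2j}\frac{(2j)!}{j!\,2^j}.$$ If $$k\le\frac{1}{e\cdot 2x(2n-1)\binom{n-1}{x-1}}\bigl(N-e\bigr),$$ then there exists a perfect matching $M$ of $K_{2n}$ such that $|M\cap M_i|\le x-1$ for every $i\in\{1,\dots,s\}$.
   Context: A perfect matching of $K_{2n}$ is a set of $n$ pairwise vertex-disjoint edges covering all $2n$ vertices; $e$ denotes Euler's number. The quantity $N$ counts the ways to choose a set of $j$ pairwise disjoint pairs from a fixed set of $2x$ vertices (leaving $2x-2j$ unpaired vertices), summed over those $j$ with $j+(2x-2j)\le n$. *)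

From Stdlib Require Import Reals.
From mathcomp Require Import all_boot.
Set Implicit Arguments. Unset Strict Implicit. Unset Printing Implicit Defensive.

Definition is_edge (n : nat) (e : {set 'I_(2 * n)}) : bool := #|e| == 2.

Definition perfect_matching (n : nat) (M : {set {set 'I_(2 * n)}}) : bool :=
  partition M [set: 'I_(2 * n)] && [forall e in M, is_edge e].

(* (2j)! / (j! 2^j) : number of perfect matchings on 2j points (exact division). *)
Definition pm_count (j : nat) : nat := (2 * j)`! %/ (j`! * 2 ^ j).

Definition Nval (n x : nat) : nat :=
  \sum_(maxn 0 (2 * x - n) <= j < x.+1) 'C(2 * x, 2 * j) * pm_count j.

From Stdlib Require Import Reals Lra.
From mathcomp Require Import all_boot zify ring.
Set Implicit Arguments. Unset Strict Implicit. Unset Printing Implicit Defensive.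

(* Proof by a union bound over the perfect matchings of K_{2n}.

   - K_{2m} has (2m-1)!! perfect matchings ([card_perfect_matchings]); the ones
     containing a fixed partial matching of 2x vertices are in bijection with
     the perfect matchings of the other 2(m-x) vertices.
   - Hence, for a fixed perfect matching M_i, at most C(n,x) (2(n-x)-1)!!
     perfect matchings share x or more edges with M_i ([card_rich_matchings]),
     and if s C(n,x) (2(n-x)-1)!! < (2n-1)!! some perfect matching shares at
     most x-1 edges with every M_i ([exists_poor_matching]).
   - Double counting incidences gives s <= k(2n-1) ([matchings_edge_load]).
   - The numerical hypothesis yields 2 k D < N with D = 2x(2n-1)C(n-1,x-1)
     ([nat_of_real_bound]), and the termwise estimate n N <= 4x^2 (2n-1)!!/(2(n-x)-1)!!
     ([Nval_bound]) turns this into the inequality required by the union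
     bound ([few_rich_matchings]). *)

Definition oddfact (m : nat) : nat := \prod_(i < m) (2 * i + 1).

Lemma oddfact_gt0 m : 0 < oddfact m.
Proof.
by rewrite /oddfact; elim/big_ind: _ => // [a b|i _]; [rewrite muln_gt0 => -> | rewrite addn1].
Qed.

Lemma oddfactS m : oddfact m.+1 = oddfact m * (2 * m + 1).
Proof. by rewrite /oddfact big_ord_recr. Qed.

Lemma oddfactD a b : oddfact (a + b) = oddfact a * \prod_(i < b) (2 * (a + i) + 1).
Proof. by rewrite /oddfact big_split_ord. Qed.

(* (2j)! = (2j-1)!! * j! * 2^j: even factors give j! 2^j, odd ones (2j-1)!!. *)
Lemma fact_double j : (2 * j)`! = oddfact j * (j`! * 2 ^ j).
Proof.
elim: j => [|j IH]; first by rewrite /oddfact big_ord0.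
have -> : 2 * j.+1 = (2 * j).+2 by rewrite mulnS.
rewrite !factS IH oddfactS expnS; lia.
Qed.

Lemma pm_countE j : pm_count j = oddfact j.
Proof.
by rewrite /pm_count fact_double mulnK // muln_gt0 fact_gt0 expn_gt0.
Qed.

Section PerfectMatchings.
Variable T : finType.

Definition perfect_matchings (V : {set T}) : {set {set {set T}}} :=
  [set M : {set {set T}} | partition M V & [forall e in M, #|e| == 2]].

Lemma perfect_matchingsP V M :
  reflect [/\ cover M = V, trivIset M, set0 \notin M & forall e, e \in M -> #|e| = 2]
          (M \in perfect_matchings V).
Proof.
rewrite inE /partition; apply: (iffP idP).
  case/andP=> /and3P[/eqP ? ? ?] /forallP H; split=> // e eM.
  by have /implyP/(_ eM)/eqP := H e.
case=> -> -> -> H /=; rewrite eqxx; apply/forallP=> e; apply/implyP=> eM.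
by rewrite H.
Qed.

Lemma card_perfect_matching V M : M \in perfect_matchings V -> #|V| = 2 * #|M|.
Proof.
rewrite inE => /andP[pM /forallP eM].
rewrite (card_partition pM) (eq_bigr (fun _ => 2)) ?sum_nat_const 1?mulnC //.
by move=> e eMe; have /implyP/(_ eMe)/eqP := eM e.
Qed.

Lemma perfect_matchings_disjoint F W V M :
  F \in perfect_matchings W -> M \in perfect_matchings (V :\: W) -> [disjoint F & M].
Proof.
case/perfect_matchingsP=> cF _ _ eF /perfect_matchingsP[cM _ _ eM].
apply/pred0P=> B /=; apply/negbTE/negP=> /andP[BF BM].
have [y yB] : exists y, y \in B by apply/set0Pn; rewrite -card_gt0 eF.
have /subsetP/(_ y yB) : B \subset W by rewrite -cF; apply: bigcup_sup.
have /subsetP/(_ y yB) : B \subset V :\: W by rewrite -cM; apply: bigcup_sup.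
by rewrite inE => /andP[/negbTE ->].
Qed.

Lemma extensions_of_matching (F : {set {set T}}) (W V : {set T}) :
  F \in perfect_matchings W -> W \subset V ->
  [set M in perfect_matchings V | F \subset M]
    = (fun M' => F :|: M') @: perfect_matchings (V :\: W).
Proof.
move=> FW WV; have FW' := FW; case/perfect_matchingsP: FW' => cF tF sF eF.
apply/setP=> M; rewrite inE; apply/andP/imsetP.
- case=> /perfect_matchingsP[cM tM sM eM] FM; exists (M :\: F); last first.
    by apply/setP=> B; rewrite !inE; case: (boolP (B \in F)) => // /(subsetP FM).
  apply/perfect_matchingsP; split; last 3 first.
  + exact: trivIsetD.
  + by rewrite inE negb_and sM orbT.
  + by move=> e /setDP[eM' _]; apply: eM.
  apply/setP=> y; rewrite !inE; apply/bigcupP/andP.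
  + case=> B /setDP[BM BnF] yB; split; last by rewrite -cM; apply/bigcupP; exists B.
    apply/negP; rewrite -cF => /bigcupP[B' B'F yB'].
    have B'M := subsetP FM _ B'F.
    have [eBB'|nBB'] := eqVneq B B'; first by rewrite eBB' B'F in BnF.
    by have /pred0P/(_ y) := (trivIsetP tM) _ _ BM B'M nBB'; rewrite /= yB yB'.
  + case=> ynW; rewrite -cM => /bigcupP[B BM yB]; exists B => //.
    rewrite inE BM andbT; apply: contra ynW => BF.
    by rewrite -cF; apply/bigcupP; exists B.
- case=> M' /perfect_matchingsP[cM tM sM eM] ->; split; last exact: subsetUl.
  apply/perfect_matchingsP; split.
  + rewrite /cover bigcup_setU -/(cover F) -/(cover M') cF cM.
    by apply/setP=> y; rewrite !inE; case: (boolP (y \in W)) => // /(subsetP WV) ->.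
  + apply: trivIsetU => //; rewrite cF cM.
    by rewrite disjoint_sym disjoints_subset setDE subsetIr.
  + by rewrite inE negb_or sF sM.
  + by move=> e /setUP[]; [apply: eF | apply: eM].
Qed.

Lemma card_extensions_of_matching (F : {set {set T}}) (W V : {set T}) :
  F \in perfect_matchings W -> W \subset V ->
  #|[set M in perfect_matchings V | F \subset M]| = #|perfect_matchings (V :\: W)|.
Proof.
move=> FW WV; rewrite (extensions_of_matching FW WV) card_in_imset // => M1 M2 P1 P2 /= E.
have /pred0P D1 := perfect_matchings_disjoint FW P1.
have /pred0P D2 := perfect_matchings_disjoint FW P2.
apply/setP=> B; move/setP/(_ B): E; rewrite !inE.
case: (boolP (B \in F)) => BF //=.
by move: (D1 B) (D2 B); rewrite /= BF /= => -> ->.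
Qed.

Lemma perfect_matchings0 : perfect_matchings set0 = [set set0].
Proof.
apply/setP=> M; rewrite !inE; apply/andP/eqP => [[pM _]|->].
  by apply/eqP; rewrite -partition_set0.
by split; [rewrite partition_set0 | apply/forallP=> e; rewrite inE].
Qed.

Lemma matching_partner_unique V M v : M \in perfect_matchings V -> v \in V ->
  #|[set w in V :\ v | [set v; w] \in M]| = 1.
Proof.
move=> /perfect_matchingsP[cM tM sM eM] vV.
have vc : v \in cover M by rewrite cM.
have pv : v \in pblock M v by rewrite mem_pblock.
have pbM : pblock M v \in M := pblock_mem vc.
have -> : [set w in V :\ v | [set v; w] \in M] = pblock M v :\ v.
  apply/setP=> w; rewrite !inE; apply/andP/andP.
  - case=> /andP[wv wV] vwM; split => //.
    have -> : pblock M v = [set v; w] by apply: def_pblock => //; rewrite !inE eqxx.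
    by rewrite !inE eqxx orbT.
  - case=> wv wp; split; first by rewrite wv /= -cM; apply/bigcupP; exists (pblock M v).
    suff -> : [set v; w] = pblock M v by [].
    apply/eqP; rewrite eqEcard cards2 eq_sym wv eM //= leqnn andbT.
    by apply/subsetP=> y; rewrite !inE => /orP[]/eqP->.
by have := cardsD1 v (pblock M v); rewrite pv eM // => -[].
Qed.

(* The complete graph on 2m vertices has (2m-1)!! perfect matchings: fixing a
   vertex v, each of the 2m-1 choices of partner w extends in (2m-3)!! ways. *)
Lemma card_perfect_matchings m (V : {set T}) :
  #|V| = 2 * m -> #|perfect_matchings V| = oddfact m.
Proof.
elim: m V => [|m IH] V hV.
  move/eqP: hV; rewrite muln0 cards_eq0 => /eqP ->.
  by rewrite perfect_matchings0 cards1 /oddfact big_ord0.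
have /card_gt0P[v vV] : 0 < #|V| by rewrite hV muln_gt0.
have partners_of w : w \in V :\ v ->
    #|[set M in perfect_matchings V | [set [set v; w]] \subset M]| = oddfact m.
  rewrite !inE => /andP[wv wV].
  have vwV : [set v; w] \subset V by apply/subsetP=> y; rewrite !inE => /orP[]/eqP->.
  rewrite (@card_extensions_of_matching _ [set v; w]) //; first apply: IH.
    rewrite cardsD hV (setIidPr vwV) cards2 eq_sym wv mulnS.
    by rewrite addSn add1n subSS subn1.
  apply/perfect_matchingsP; split; [exact: cover1 | exact: trivIset1 | |].
    by rewrite inE eq_sym; apply/set0Pn; exists v; rewrite !inE eqxx.
  by move=> e; rewrite inE => /eqP->; rewrite cards2 eq_sym wv.
transitivity (\sum_(M in perfect_matchings V) #|[set w in V :\ v | [set v; w] \in M]|).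
  by rewrite -sum1_card; apply: eq_bigr => M MV; rewrite matching_partner_unique.
under eq_bigr do rewrite -sum1_card big_mkcond.
rewrite exchange_big /=.
transitivity (\sum_(w in V :\ v) oddfact m).
  rewrite [RHS]big_mkcond; apply: eq_bigr => w _.
  case: ifP => wV; last by apply: big1 => M _; rewrite inE wV.
  rewrite -big_mkcondr -(partners_of w wV) -sum1_card; apply: eq_bigl => M.
  by move: wV; rewrite !inE sub1set => /andP[-> ->].
rewrite sum_nat_const.
have -> : #|V :\ v| = (2 * m).+1.
  by move: (cardsD1 v V); rewrite vV hV mulnS add1n addSn => -[].
by rewrite oddfactS mulnC addn1.
Qed.

End PerfectMatchings.

Lemma card_bigcup_le (I T : finType) (A : {pred I}) (F : I -> {set T}) :
  #|\bigcup_(i in A) F i| <= \sum_(i in A) #|F i|.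
Proof.
elim/big_ind2: _ => [|a b c d h1 h2|i _] //; first by rewrite cards0.
by apply: leq_trans (leq_card_setU _ _) _; apply: leq_add.
Qed.

Section CompleteGraph.
Variables (T : finType) (n : nat).
Hypothesis cardT : #|T| = 2 * n.

Local Notation PM := (perfect_matchings [set: T]).

Lemma card_matching M : M \in PM -> #|M| = n.
Proof. by move/card_perfect_matching; rewrite cardsT cardT => /eqP; rewrite eqn_pmul2l // => /eqP. Qed.

(* Double counting of (edge, matching) incidences: s matchings of n edges each,
   spread over n(2n-1) edges each used at most k times, force s <= k(2n-1). *)
Lemma matchings_edge_load s k (Ms : 'I_s -> {set {set T}}) : 0 < n ->
  (forall i, Ms i \in PM) ->
  (forall e : {set T}, #|e| == 2 -> #|[set i | e \in Ms i]| <= k) ->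
  s <= k * (2 * n - 1).
Proof.
move=> n_gt0 MsP load.
pose edges := [set e : {set T} | #|e| == 2].
have card_edges : #|edges| = n * (2 * n - 1).
  rewrite card_draws cardT bin2 -mulnA mul2n doubleK; lia.
have incidences : s * n = \sum_(e in edges) #|[set i | e \in Ms i]|.
  transitivity (\sum_(i < s) \sum_(e in edges) ((e \in Ms i) : nat)).
    rewrite -[s in LHS]card_ord -sum_nat_const; apply: eq_bigr => i _.
    rewrite -(card_matching (MsP i)) -sum1_card big_mkcond [RHS]big_mkcond.
    apply: eq_bigr => e _; rewrite inE; case: (boolP (e \in Ms i)) => eM; last by case: ifP.
    by case/perfect_matchingsP: (MsP i) => _ _ _ /(_ e eM) ->.
  rewrite exchange_big /=; apply: eq_bigr => e _.
  by rewrite -sum1_card [RHS]big_mkcond; apply: eq_bigr => i _; rewrite inE.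
have : s * n <= \sum_(e in edges) k.
  by rewrite incidences; apply: leq_sum => e; rewrite inE; apply: load.
by rewrite sum_nat_const card_edges mulnC -mulnA leq_pmul2l // mulnC.
Qed.

(* A matching meeting M0 in at least x edges contains an x-subset F of M0, and
   the matchings containing F are the (2(n-x)-1)!! matchings of the remaining
   2(n-x) vertices; there are C(n, x) choices of F. *)
Lemma card_rich_matchings x M0 : M0 \in PM ->
  #|[set M in PM | x <= #|M :&: M0|]| <= 'C(n, x) * oddfact (n - x).
Proof.
move=> M0P; have M0P' := M0P; case/perfect_matchingsP: M0P' => _ tM0 sM0 eM0.
pose Fs := [set F : {set {set T}} | F \subset M0 & #|F| == x].
have rich_sub : [set M in PM | x <= #|M :&: M0|]
    \subset \bigcup_(F in Fs) [set M in PM | F \subset M].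
  apply/subsetP=> M; rewrite inE => /andP[MP hM]; apply/bigcupP.
  pose F := [set y in take x (enum (M :&: M0))].
  have FMM0 : F \subset M :&: M0 by apply/subsetP=> y; rewrite inE => /mem_take; rewrite mem_enum.
  exists F; last by rewrite inE MP; apply: subset_trans FMM0 (subsetIl _ _).
  rewrite inE (subset_trans FMM0 (subsetIr _ _)) cardsE /=.
  rewrite (card_uniqP (take_uniq x (enum_uniq (mem (M :&: M0))))).
  by rewrite size_takel // -cardE.
apply: leq_trans (subset_leq_card rich_sub) _.
apply: leq_trans (card_bigcup_le _ _) _.
rewrite -{1}(card_matching M0P) -cards_draws -sum_nat_const leq_sum // => F.
rewrite inE => /andP[FM0 /eqP cardF].
have FP : F \in perfect_matchings (cover F).
  apply/perfect_matchingsP; split; [by [] | exact: trivIsetS FM0 tM0 | |].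
    by apply: contra sM0 => /(subsetP FM0).
  by move=> e /(subsetP FM0) /eM0.
rewrite (card_extensions_of_matching FP (subsetT _)) (@card_perfect_matchings _ (n - x)) //.
have := cardsC (cover F); rewrite setTD cardT (card_perfect_matching FP) cardF; lia.
Qed.

Lemma exists_poor_matching x s (Ms : 'I_s -> {set {set T}}) :
  (forall i, Ms i \in PM) -> s * ('C(n, x) * oddfact (n - x)) < oddfact n ->
  exists2 M, M \in PM & forall i, #|M :&: Ms i| < x.
Proof.
move=> MsP few.
pose rich i := [set M in PM | x <= #|M :&: Ms i|].
have few_rich : #|\bigcup_(i in [set: 'I_s]) rich i| < #|PM|.
  apply: leq_ltn_trans (card_bigcup_le _ _) _.
  rewrite (card_perfect_matchings (m := n)) ?cardsT //.
  apply: leq_ltn_trans few.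
  apply: (@leq_trans (\sum_(i in [set: 'I_s]) ('C(n, x) * oddfact (n - x)))).
    by apply: leq_sum => i _; apply: card_rich_matchings.
  by rewrite sum_nat_const cardsT card_ord.
have /subsetPn[M MP Mpoor] : ~~ (PM \subset \bigcup_(i in [set: 'I_s]) rich i).
  by apply/negP=> /subset_leq_card; rewrite leqNgt few_rich.
exists M => // i.
rewrite ltnNge; move: Mpoor; apply: contra => rich_i.
by apply/bigcupP; exists i => //; rewrite inE MP.
Qed.

End CompleteGraph.

Definition top_oddfact (n x : nat) : nat := \prod_(i < x) (2 * (n - x + i) + 1).

Lemma oddfact_top n x : x <= n -> oddfact n = oddfact (n - x) * top_oddfact n x.
Proof. by move=> xn; rewrite /top_oddfact -oddfactD subnK. Qed.

Lemma bin_le_exp m k : 'C(m, k) <= m ^ k.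
Proof.
apply: (@leq_trans (m ^_ k)); first by rewrite -bin_ffact leq_pmulr // fact_gt0.
rewrite ffact_prod; apply: (@leq_trans (\prod_(i < k) m)).
  by apply: leq_prod => i _; apply: leq_subr.
by rewrite prod_nat_const card_ord.
Qed.

Lemma prod_ge_const b c (F : nat -> nat) : (forall i, c <= F i) ->
  c ^ b <= \prod_(i < b) F i.
Proof.
move=> cF; elim: b => [|b IH]; first by rewrite big_ord0.
by rewrite big_ord_recr expnSr leq_mul.
Qed.

(* Choosing the 2j paired vertices among 2x and matching them, then matching the
   remaining 2(x-j): C(2x,2j) (2j-1)!! (2(x-j)-1)!! = (2x-1)!! C(x,j). *)
Lemma pair_then_match x j : j <= x ->
  'C(2 * x, 2 * j) * oddfact j * oddfact (x - j) = oddfact x * 'C(x, j).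
Proof.
move=> jx.
have e2x := bin_fact (_ : 2 * j <= 2 * x); rewrite leq_mul2l jx orbT in e2x.
have ex := bin_fact jx.
have e2 : 2 ^ x = 2 ^ j * 2 ^ (x - j) by rewrite -expnD subnKC.
rewrite -mulnBr !fact_double -ex e2 in e2x.
apply/eqP; rewrite -(@eqn_pmul2r (j`! * (x - j)`! * (2 ^ j * 2 ^ (x - j)))); last first.
  by rewrite !muln_gt0 !fact_gt0 !expn_gt0.
move: e2x; set A := 'C(2 * x, 2 * j); set B := oddfact j; set C := oddfact (x - j).
set D := oddfact x; set E := 'C(x, j); set f1 := j`!; set f2 := (x - j)`!.
set p1 := 2 ^ j; set p2 := 2 ^ (x - j) => e.
apply/eqP; nia.
Qed.

(* The estimate behind each summand of N: for a <= x (a = number of unmatched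
   pairs), C(x, a) (2x-1)!! (x+1) <= 4x^2 (2(x+a)-3)!!. *)
Lemma binomial_oddfact_bound x a : 0 < x -> a <= x ->
  'C(x, a) * oddfact x * (x + 1) <= 4 * x ^ 2 * oddfact (x + a).-1.
Proof.
move=> x_gt0; case: a => [|b] hb.
  case: x x_gt0 hb => // x' _ _; rewrite bin0 addn0 succnK oddfactS.
  by have := oddfact_gt0 x'; nia.
rewrite (addnS x b) succnK oddfactD.
have H1 := @prod_ge_const b (2 * x) (fun i => 2 * (x + i) + 1) ltac:(move=> i; lia).
have H2 := bin_le_exp x b.+1.
set P := \prod_(i < _) _ in H1 *; set o := oddfact x; set X := x in H1 H2 x_gt0 *.
apply: (@leq_trans (X ^ b.+1 * o * (X + 1))).
  by rewrite !leq_mul.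
apply: (@leq_trans (4 * X ^ 2 * (o * (2 * X) ^ b))); last first.
  by rewrite !leq_mul.
rewrite expnMn expnS.
have : X ^ b <= 2 ^ b * X ^ b by rewrite leq_pmull // expn_gt0.
have : 0 < X ^ b by rewrite expn_gt0 x_gt0.
set u := X ^ b; set v := 2 ^ b; nia.
Qed.

(* Each summand of N, weighted by n and by the number x+1 of summands, is at
   most 4x^2 (2n-1)...(2(n-x)+1), as long as the 2(x-j) unpaired vertices fit. *)
Lemma summand_bound n x j : 0 < x -> j <= x -> x + (x - j) <= n ->
  n * ('C(2 * x, 2 * j) * pm_count j) * (x + 1) <= 4 * x ^ 2 * top_oddfact n x.
Proof.
case: x => // x' _ hj hn; rewrite pm_countE.
have est := binomial_oddfact_bound (ltn0Sn x') (leq_subr j x'.+1).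
rewrite bin_sub // in est; set a := x'.+1 - j in est hn.
rewrite (_ : (x'.+1 + a).-1 = a + x') ?oddfactD in est; last by rewrite addSn addnC.
set Qa := \prod_(i < x') _ in est.
have split_id := pair_then_match hj; rewrite -/a in split_id.
have summand_le : 'C(2 * x'.+1, 2 * j) * oddfact j * (x'.+1 + 1) <= 4 * x'.+1 ^ 2 * Qa.
  rewrite -(@leq_pmul2r (oddfact a)) ?oddfact_gt0 //.
  move: est split_id; set A := 'C(2 * x'.+1, 2 * j) * oddfact j.
  set E := 'C(x'.+1, j); set D := oddfact x'.+1; set o := oddfact a => est_le split_eq.
  nia.
rewrite /top_oddfact big_ord_recr /=; set Qn := \prod_(i < x') _.
have Qa_le : Qa <= Qn.
  by apply: leq_prod => i _; rewrite leq_add2r leq_mul2l; apply/orP; right; lia.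
rewrite (_ : 2 * (n - x'.+1 + x') + 1 = (2 * n).-1); last by lia.
apply: (@leq_trans ((2 * n).-1 * (4 * x'.+1 ^ 2 * Qn))); last by rewrite mulnC -mulnA.
rewrite -mulnA; apply: leq_mul; first by lia.
by apply: leq_trans summand_le _; rewrite leq_mul2l Qa_le orbT.
Qed.

Lemma Nval_bound n x : 0 < x -> n * Nval n x <= 4 * x ^ 2 * top_oddfact n x.
Proof.
move=> x_gt0; rewrite -(@leq_pmul2r (x + 1)) ?addn1 //.
rewrite /Nval big_distrr big_distrl /=.
apply: (@leq_trans (\sum_(maxn 0 (2 * x - n) <= j < x.+1) 4 * x ^ 2 * top_oddfact n x)).
  rewrite big_nat_cond [X in _ <= X]big_nat_cond.
  apply: leq_sum => j /andP[/andP[lo hi] _].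
  by have := @summand_bound n x j x_gt0; rewrite addn1; apply; lia.
by rewrite sum_nat_const_nat mulnC leq_mul2l leq_subr orbT.
Qed.

Section RealHypothesis.
Local Open Scope R_scope.

(* Since e > 2, the hypothesis k <= (N - e) / (e D) with D > 0 forces 2 k D < N. *)
Lemma nat_of_real_bound (k D N : nat) : (0 < D)%N ->
  INR k <= / (exp 1 * INR D) * (INR N - exp 1) -> (2 * k * D < N)%N.
Proof.
move=> D_gt0 hb; apply/ltP/INR_lt; rewrite -!multE !mult_INR.
have e_gt2 : 2 < exp 1 by have := exp_ineq1 1 ltac:(lra); lra.
have hD : 0 < INR D by apply/lt_0_INR/ltP.
have hk : 0 <= INR k := pos_INR k.
have eD_pos : 0 < exp 1 * INR D by nra.
have keD : INR k * (exp 1 * INR D) <= INR N - exp 1.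
  set eD := exp 1 * INR D in eD_pos hb *.
  have inv : eD * / eD = 1 by apply: Rinv_r; lra.
  have -> : INR N - exp 1 = / eD * (INR N - exp 1) * eD.
    by rewrite Rmult_comm -Rmult_assoc inv Rmult_1_l.
  exact: Rmult_le_compat_r (Rlt_le _ _ eD_pos) hb.
have : 2 * (INR k * INR D) <= exp 1 * (INR k * INR D).
  by apply: Rmult_le_compat_r; nra.
change (INR 2) with 2; nra.
Qed.

End RealHypothesis.

Lemma few_rich_matchings n x k s : 0 < x -> x <= n -> s <= k * (2 * n - 1) ->
  2 * k * (2 * x * (2 * n - 1) * 'C(n - 1, x - 1)) < Nval n x ->
  s * ('C(n, x) * oddfact (n - x)) < oddfact n.
Proof.
move=> x_gt0 xn hs hN.
have n_gt0 : 0 < n := leq_trans x_gt0 xn.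
have absorb : n * 'C(n - 1, x - 1) = x * 'C(n, x).
  by rewrite !subn1 mul_bin_diag prednK.
have hP : k * (2 * n - 1) * 'C(n, x) < top_oddfact n x.
  rewrite -(@ltn_pmul2l (4 * x ^ 2)) ?muln_gt0 ?expn_gt0 ?x_gt0 //.
  apply: leq_trans (Nval_bound n x_gt0).
  have -> : 4 * x ^ 2 * (k * (2 * n - 1) * 'C(n, x))
          = n * (2 * k * (2 * x * (2 * n - 1) * 'C(n - 1, x - 1))).
    have -> : n * (2 * k * (2 * x * (2 * n - 1) * 'C(n - 1, x - 1)))
            = 4 * x * k * (2 * n - 1) * (n * 'C(n - 1, x - 1)) by ring.
    by rewrite absorb; ring.
  by rewrite ltn_pmul2l.
rewrite (oddfact_top xn) mulnA [_ * oddfact _]mulnC ltn_pmul2l ?oddfact_gt0 //.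
by apply: leq_ltn_trans hP; rewrite leq_mul2r hs orbT.
Qed.

Theorem theorem3 (n x k s : nat) (Ms : 'I_s -> {set {set 'I_(2 * n)}})
  (hx0 : 0 < x) (hxn : x <= n)
  (hMs : forall i, perfect_matching (Ms i))
  (hk : forall e : {set 'I_(2 * n)}, is_edge e -> #|[set i | e \in Ms i]| <= k)
  (hbound : Rle (INR k)
      (Rmult (Rinv (Rmult (exp 1) (INR (2 * x * (2 * n - 1) * 'C(n - 1, x - 1)))))
             (Rminus (INR (Nval n x)) (exp 1)))) :
  exists M : {set {set 'I_(2 * n)}},
    perfect_matching M /\ forall i : 'I_s, #|M :&: Ms i| <= x - 1.
Proof.
have n_gt0 : 0 < n := leq_trans hx0 hxn.
have cardT : #|'I_(2 * n)| = 2 * n := card_ord _.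
have MsP i : Ms i \in perfect_matchings [set: 'I_(2 * n)] by rewrite inE; apply: hMs.
have hs : s <= k * (2 * n - 1) := matchings_edge_load cardT n_gt0 MsP hk.
have D_gt0 : 0 < 2 * x * (2 * n - 1) * 'C(n - 1, x - 1).
  by rewrite !muln_gt0 hx0 bin_gt0 /=; lia.
have few := few_rich_matchings hx0 hxn hs (nat_of_real_bound D_gt0 hbound).
have [M MP poor] := exists_poor_matching cardT MsP few.
exists M; split; first by move: MP; rewrite inE.
by move=> i; rewrite subn1 -ltnS prednK.
Qed.
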